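(* Let $\Omega,\Omega^*$ be compact metric spaces and $c\in C(\Omega\times\Omega^* )$. Let $\mu_1,\mu_2$ be Borel probability measures on $\Omega$, $\nu$ a Borel probability measure on $\Omega^*$, and $\phi_i\in\Phi_c(\mu_i,\nu)$ for $i=1,2$. Suppose that at least one of the $\phi_i$ is unique up to an additive constant, i.e. $\Phi_c(\mu_i,\nu)=\{\phi_i+C: C\in\mathbb R\}$ for $i=1$ or $i=2$. Consider a Borel set $U\subset\Omega$ with $U\neq\Omega$ such that $\mu_1\leq\mu_2$ on $U$ and $\phi_1\leq\phi_2$ on $\Omega\setminus U$. Then $\phi_1\leq\phi_2$ on $\Omega$.
   Context: For $\phi\in C(\Omega)$, $\phi^c(y)=\sup_{x\in\Omega}\phi(x)-c(x,y)$. $\mathcal T_c(\mu,\nu)=\inf_{\pi\in\Pi(\mu,\nu)}\int c\,d\pi$ over couplings $\pi$ of $\mu$ and $\nu$; by duality $\mathcal T_c(\mu,\nu)=\max_{\phi\in C(\Omega)}\int\phi\,d\mu-\int\phi^c\,d\nu$. $\Phi_c(\mu,\nu)=\{\phi\in C(\Omega):\int_\Omega\phi\,d\mu-\int_{\Omega^*}\phi^c\,d\nu=\mathcal T_c(\mu,\nu)\}$. ''$\mu_1\leq\mu_2$ on $U$'' means $\mu_1(A)\leq\mu_2(A)$ for all Borel $A\subset U$. *)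

From HB Require Import structures.
From mathcomp Require Import all_boot all_order all_algebra.
From mathcomp Require Import all_classical all_reals all_analysis.
Set Implicit Arguments. Unset Strict Implicit. Unset Printing Implicit Defensive.
Import Order.TTheory GRing.Theory Num.Theory.
Import numFieldNormedType.Exports.
Local Open Scope classical_set_scope.
Local Open Scope ring_scope.

(* metric spaces with a distinguished point (needed to build the Borel
   measurable structure; harmless since the spaces carry probability
   measures, hence are nonempty) *)
#[short(type="pmetricType")]
HB.structure Definition PointedMetric (K : numDomainType) :=
  { M of Pointed M & Metric K M }.

Definition borel {K : numDomainType} (T : pmetricType K) :=
  g_sigma_algebraType (@open T).

Section OT.
Context {R : realType} {Om Oms : pmetricType R}.

Definition ctrans (c : Om * Oms -> R) (phi : Om -> R) (y : Oms) : R :=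
  sup [set phi x - c (x, y) | x in [set: Om]].

Definition is_coupling (mu : probability (borel Om) R)
  (nu : probability (borel Oms) R)
  (pi : probability (borel Om * borel Oms)%type R) : Prop :=
  (forall A : set (borel Om), measurable A -> pi (A `*` setT) = mu A) /\
  (forall B : set (borel Oms), measurable B -> pi (setT `*` B) = nu B).

Definition Tc (c : Om * Oms -> R) (mu : probability (borel Om) R)
  (nu : probability (borel Oms) R) : \bar R :=
  ereal_inf [set (\int[pi]_z (c z)%:E)%E
            | pi in [set pi | is_coupling mu nu pi]].

Definition Phi_c (c : Om * Oms -> R) (mu : probability (borel Om) R)
  (nu : probability (borel Oms) R) (phi : Om -> R) : Prop :=
  continuous phi /\
  ((\int[mu]_x (phi x)%:E - \int[nu]_y (ctrans c phi y)%:E)%E = Tc c mu nu).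

Definition unique_up_to_const (Phi : (Om -> R) -> Prop) (phi : Om -> R) : Prop :=
  forall psi : Om -> R, Phi psi <-> exists C : R, psi = (fun x => phi x + C).

End OT.

From HB Require Import structures.
From mathcomp Require Import all_boot all_order all_algebra.
From mathcomp Require Import all_classical all_reals all_analysis.
From mathcomp Require Import measurable_realfun lra.
Import Order.TTheory GRing.Theory Num.Theory.
Import numFieldNormedType.Exports.
Local Open Scope classical_set_scope.
Local Open Scope ring_scope.
Set Implicit Arguments.
Unset Strict Implicit.

(* Let m := phi1 \min phi2, M := phi1 \max phi2 and
   J(mu, phi) := int phi dmu - int phi^c dnu ([dual_value]), so that, by weak
   duality J <= T_c, Phi_c(mu, nu) is the set of continuous maximisers of
   J(mu, .). As m <= phi_i we get m^c <= min(phi1^c, phi2^c), while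
   M^c <= max(phi1^c, phi2^c); hence m^c + M^c <= phi1^c + phi2^c. The excess
   g = phi1 - m = M - phi2 is nonnegative and vanishes off U, where mu1 <= mu2,
   so int g dmu1 <= int g dmu2. Altogether
   J(mu1, m) + J(mu2, M) >= J(mu1, phi1) + J(mu2, phi2): m and M are optimal
   too. If Phi_c(mu1, nu) = phi1 + R, then m = phi1 + C, and evaluating at a
   point outside U, where m = phi1, gives C = 0, i.e. phi1 <= phi2; the case
   Phi_c(mu2, nu) = phi2 + R is symmetric, with M = phi2. *)

Section bounded_fun.
Context {R : realType}.

Lemma bounded_funE {T : Type} (f : T -> R) :
  bounded_fun f <-> exists M, forall x, `|f x| <= M.
Proof.
split=> [[M [_ fM]]|[M fM]].
  by exists (`|M| + 1) => x; apply: fM => //; rewrite (le_lt_trans (ler_norm M)) ?ltrDl.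
rewrite /bounded_fun /bounded_near /=; near=> N => x _.
by rewrite (le_trans (fM x)) //; near: N; exact: nbhs_pinfty_ge.
Unshelve. all: by end_near.
Qed.

Lemma bounded_fun_comp {S T : Type} (f : T -> R) (g : S -> T) :
  bounded_fun f -> bounded_fun (f \o g).
Proof. by move=> /bounded_funE[M fM]; apply/bounded_funE; exists M => x; exact: fM. Qed.

Lemma continuous_bounded_fun (X : topologicalType) (f : X -> R) :
  compact [set: X] -> continuous f -> bounded_fun f.
Proof.
move=> cX cf.
have := compact_bounded (continuous_compact (continuous_subspaceT cf) cX).
by rewrite /bounded_near /=; apply: filterS => M fM x _; apply: fM; exists x.
Qed.

Lemma continuous_bounded_funX (X Y : topologicalType) (f : X * Y -> R) :
  compact [set: X] -> compact [set: Y] -> continuous f -> bounded_fun f.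
Proof.
by move=> cX cY; apply: continuous_bounded_fun; rewrite -setXTT; exact: compact_setX.
Qed.

End bounded_fun.

Section borel_measurable.
Context {R : realType} {X : pmetricType R}.

Lemma open_superlevel_measurable (f : X -> R) :
  (forall a, open [set x | a < f x]) -> measurable_fun setT (f : borel X -> R).
Proof.
move=> fo; apply: (measurability _ (RGenOInfty.measurableE R)).
move=> /= _ [_ [a ->]] <-; rewrite setTI; apply: sub_sigma_algebra.
rewrite (_ : f @^-1` _ = [set x | a < f x]); first exact: fo.
by apply/seteqP; split => x /=; rewrite in_itv /= andbT.
Qed.

Lemma continuous_measurable (f : X -> R) :
  continuous f -> measurable_fun setT (f : borel X -> R).
Proof.
move=> cf; apply: open_superlevel_measurable => a.
rewrite (_ : [set x | a < f x] = f @^-1` `]a, +oo[%classic).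
  by apply: open_comp => [x _|]; [exact: cf|exact: rray_open].
by apply/seteqP; split => x /=; rewrite in_itv /= andbT.
Qed.

End borel_measurable.

Section ctrans.
Context {R : realType} {Om Oms : pmetricType R} (c : Om * Oms -> R).
Hypothesis c_bounded : bounded_fun c.

Section bounded_potential.
Variable psi : Om -> R.
Hypothesis psi_bounded : bounded_fun psi.

Let potential_bounded : exists M, forall x y, `|psi x - c (x, y)| <= M.
Proof.
have [M psiM] := (bounded_funE psi).1 psi_bounded.
have [Mc cM] := (bounded_funE c).1 c_bounded.
by exists (M + Mc) => x y; rewrite (le_trans (ler_normB _ _)) // lerD.
Qed.

Lemma has_sup_ctrans y : has_sup [set psi x - c (x, y) | x in [set: Om]].
Proof.
have [M psiM] := potential_bounded.
split; first by exists (psi point - c (point, y)), point.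
by exists M => _ [x _ <-]; exact: le_trans (ler_norm _) (psiM x y).
Qed.

Lemma ctrans_ge x y : psi x - c (x, y) <= ctrans c psi y.
Proof. by apply: (sup_upper_bound (has_sup_ctrans y)); exists x. Qed.

Lemma ctrans_le y a : (forall x, psi x - c (x, y) <= a) -> ctrans c psi y <= a.
Proof. by move=> psia; apply: ge_sup; [case: (has_sup_ctrans y)|move=> _ [x _ <-]]. Qed.

Lemma bounded_ctrans : bounded_fun (ctrans c psi).
Proof.
have [M psiM] := potential_bounded.
apply/bounded_funE; exists M => y; rewrite ler_norml; apply/andP; split.
  rewrite (le_trans _ (ctrans_ge point y)) //.
  by move: (psiM point y); rewrite ler_norml => /andP[].
by apply: ctrans_le => x; move: (psiM x y); rewrite ler_norml => /andP[].
Qed.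

(* [ctrans c psi] is lower semicontinuous, as a supremum of continuous functions. *)
Lemma measurable_ctrans : continuous c ->
  measurable_fun setT (ctrans c psi : borel Oms -> R).
Proof.
move=> cc; apply: open_superlevel_measurable => a; rewrite openE => y0 /= a_lt.
have [_ [x _ <-] ax] := sup_gt (proj1 (has_sup_ctrans y0)) a_lt.
have cx : continuous (fun y : Oms => psi x - c (x, y)).
  move=> y; apply: cvgB; first exact: cvg_cst.
  apply: continuous_comp; last exact: cc.
  by apply: cvg_pair; [exact: cvg_cst|exact: cvg_id].
rewrite /interior; near=> y; apply: (lt_le_trans _ (ctrans_ge x y)).
by near: y; exact: (cvgr_gt _ (cx y0)).
Unshelve. all: by end_near.
Qed.

End bounded_potential.

Lemma le_ctrans (phi psi : Om -> R) : bounded_fun phi -> bounded_fun psi ->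
  (forall x, phi x <= psi x) -> forall y, ctrans c phi y <= ctrans c psi y.
Proof.
move=> phiB psiB le_phi y; apply: ctrans_le => // x.
by rewrite (le_trans _ (ctrans_ge psiB x y)) // lerD2r.
Qed.

Lemma ctrans_max_le (phi psi : Om -> R) : bounded_fun phi -> bounded_fun psi ->
  bounded_fun (phi \max psi) -> forall y,
  ctrans c (phi \max psi) y <= Num.max (ctrans c phi y) (ctrans c psi y).
Proof.
move=> phiB psiB maxB y; apply: ctrans_le => // x /=.
have := ctrans_ge phiB x y; have := ctrans_ge psiB x y.
by case: (leP (phi x) (psi x)); case: (leP (ctrans c phi y) (ctrans c psi y)); lra.
Qed.

Lemma ctrans_min_add_max_le (phi psi : Om -> R) : bounded_fun phi -> bounded_fun psi ->
  bounded_fun (phi \min psi) -> bounded_fun (phi \max psi) -> forall y,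
  ctrans c (phi \min psi) y + ctrans c (phi \max psi) y
  <= ctrans c phi y + ctrans c psi y.
Proof.
move=> phiB psiB minB maxB y; rewrite -(addr_min_max (ctrans c phi y)).
apply: lerD; last exact: ctrans_max_le.
by rewrite le_min !le_ctrans // => x /=; rewrite ge_min lexx ?orbT.
Qed.

End ctrans.

Lemma integrable_bounded_fun d {T : measurableType d} {R : realType}
  (P : probability T R) (f : T -> R) :
  measurable_fun setT f -> bounded_fun f -> P.-integrable setT (EFin \o f).
Proof.
move=> mf fB; apply: measurable_bounded_integrable => //.
exact: le_lt_trans (probability_le1 P measurableT) (ltry 1).
Qed.

Lemma EFin_Rintegral d {T : measurableType d} {R : realType}
  (mu : {measure set T -> \bar R}) (D : set T) (f : T -> R) :
  measurable D -> mu.-integrable D (EFin \o f) ->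
  (\int[mu]_(x in D) f x)%:E = (\int[mu]_(x in D) (f x)%:E)%E.
Proof. by move=> mD intf; rewrite fineK //; exact: integrable_fin_num. Qed.

Section le_integral_any.
Local Open Scope ereal_scope.
Context d {T : measurableType d} {R : realType}.
Implicit Types (mu : {measure set T -> \bar R}) (f g : T -> \bar R).

(* No measurability is needed, the integral of a nonnegative function being a
   supremum over the simple functions below it. This matters for [Tc], which
   integrates the cost [c] without knowing it measurable for the product
   sigma-algebra. *)
Lemma ge0_le_integral_any mu f g : (forall x, 0 <= f x) ->
  (forall x, f x <= g x) -> \int[mu]_x f x <= \int[mu]_x g x.
Proof.
move=> f0 fg; have g0 x : 0 <= g x := le_trans (f0 x) (fg x).
rewrite (ge0_integralTE _ f0) (ge0_integralTE _ g0).
by apply: ereal_sup_le => _ [h hf <-]; exists h => //= x; exact: le_trans (hf x) (fg x).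
Qed.

Lemma le_integral_any mu f g :
  (forall x, f x <= g x) -> \int[mu]_x f x <= \int[mu]_x g x.
Proof.
move=> fg; rewrite integralE [leRHS]integralE; apply: leeB.
  apply: ge0_le_integral_any => x; first exact: funepos_ge0.
  by apply: (@funepos_le _ _ setT) => [y _|]; rewrite ?in_setT.
apply: ge0_le_integral_any => x; first exact: funeneg_ge0.
by apply: (@funeneg_le _ _ setT) => [y _|]; rewrite ?in_setT.
Qed.

Lemma ge0_le_measure_integral_supp mu1 mu2 (U : set T) g : measurable U ->
  (forall A, measurable A -> A `<=` U -> mu1 A <= mu2 A) ->
  measurable_fun setT g -> (forall x, 0 <= g x) -> (forall x, ~ U x -> g x = 0) ->
  \int[mu1]_x g x <= \int[mu2]_x g x.
Proof.
move=> mU le_mu mg g0 gU.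
have gE mu : \int[mu]_x g x = \int[mrestr mu mU]_(x in U) g x.
  rewrite (eq_measure_integral mu); last first.
    by move=> A mA AU; rewrite /= /mrestr setIidl.
  rewrite [RHS]integral_mkcond; apply: eq_integral => x _; rewrite /patch.
  by case: ifPn => // /negP; rewrite in_setE => /gU ->.
rewrite !gE; apply: ge0_le_measure_integral => // A mA.
by apply: le_mu; [exact: measurableI|exact: subIsetr].
Qed.

End le_integral_any.

Section coupling.
Context {R : realType} {Om Oms : pmetricType R}.
Variables (mu : probability (borel Om) R) (nu : probability (borel Oms) R).
Variable pi : probability (borel Om * borel Oms)%type R.
Hypothesis pi_coupling : is_coupling mu nu pi.

Lemma integral_coupling_fst (f : Om -> R) :
  measurable_fun setT (f : borel Om -> R) -> bounded_fun f ->
  (\int[mu]_x (f x)%:E = \int[pi]_z (f z.1)%:E)%E.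
Proof.
move=> mf fB.
rewrite (eq_measure_integral (pushforward pi fst)); last first.
  move=> A mA _ /=; rewrite -(proj1 pi_coupling A mA); congr (pi _).
  by apply/seteqP; split => z /=; [case|split].
rewrite integral_pushforward //; first exact/measurable_EFinP.
apply: integrable_bounded_fun; last exact: bounded_fun_comp.
exact: measurableT_comp mf measurable_fst.
Qed.

Lemma integral_coupling_snd (f : Oms -> R) :
  measurable_fun setT (f : borel Oms -> R) -> bounded_fun f ->
  (\int[nu]_y (f y)%:E = \int[pi]_z (f z.2)%:E)%E.
Proof.
move=> mf fB.
rewrite (eq_measure_integral (pushforward pi snd)); last first.
  move=> A mA _ /=; rewrite -(proj2 pi_coupling A mA); congr (pi _).
  by apply/seteqP; split => z /=; [case|split].
rewrite integral_pushforward //; first exact/measurable_EFinP.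
apply: integrable_bounded_fun; last exact: bounded_fun_comp.
exact: measurableT_comp mf measurable_snd.
Qed.

End coupling.

Definition dual_value {R : realType} {Om Oms : pmetricType R}
  (c : Om * Oms -> R) (mu : probability (borel Om) R)
  (nu : probability (borel Oms) R) (phi : Om -> R) : R :=
  \int[mu]_x phi x - \int[nu]_y ctrans c phi y.

Section compact_duality.
Context {R : realType} {Om Oms : pmetricType R} (c : Om * Oms -> R).
Hypotheses (Om_compact : compact [set: Om]) (Oms_compact : compact [set: Oms]).
Hypothesis c_continuous : continuous c.

Let c_bounded : bounded_fun c :=
  continuous_bounded_funX Om_compact Oms_compact c_continuous.

Let bounded_continuous (phi : Om -> R) : continuous phi -> bounded_fun phi.
Proof. exact: continuous_bounded_fun. Qed.

Lemma integrable_continuous (P : probability (borel Om) R) (phi : Om -> R) :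
  continuous phi -> P.-integrable setT (EFin \o phi).
Proof.
move=> cphi; apply: integrable_bounded_fun; last exact: bounded_continuous.
exact: continuous_measurable.
Qed.

Lemma integrable_ctrans (nu : probability (borel Oms) R) (phi : Om -> R) :
  continuous phi -> nu.-integrable setT (EFin \o ctrans c phi).
Proof.
move=> cphi; apply: integrable_bounded_fun.
  exact (measurable_ctrans c_bounded (bounded_continuous cphi) c_continuous).
exact (bounded_ctrans c_bounded (bounded_continuous cphi)).
Qed.

Variables (mu : probability (borel Om) R) (nu : probability (borel Oms) R).

Lemma dual_valueE (phi : Om -> R) : continuous phi ->
  (\int[mu]_x (phi x)%:E - \int[nu]_y (ctrans c phi y)%:E)%E
  = (dual_value c mu nu phi)%:E.
Proof.
move=> cphi; rewrite /dual_value EFinB.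
by rewrite !EFin_Rintegral ?integrable_continuous ?integrable_ctrans.
Qed.

Lemma weak_duality (phi : Om -> R) : continuous phi ->
  ((dual_value c mu nu phi)%:E <= Tc c mu nu)%E.
Proof.
move=> cphi; have phiB := bounded_continuous cphi.
have mphi := continuous_measurable cphi.
have mphic := measurable_ctrans c_bounded phiB c_continuous.
rewrite -dual_valueE //; apply/ereal_infP => _ [pi pi_coupling <-].
rewrite (integral_coupling_fst pi_coupling mphi phiB).
rewrite (integral_coupling_snd pi_coupling mphic (bounded_ctrans c_bounded phiB)).
rewrite -integralB_EFin //; last first.
- apply: integrable_bounded_fun; last exact/bounded_fun_comp/(bounded_ctrans c_bounded).
  exact: measurableT_comp mphic measurable_snd.
- apply: integrable_bounded_fun; last exact: bounded_fun_comp.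
  exact: measurableT_comp mphi measurable_fst.
apply: le_integral_any => -[x y]; rewrite lee_fin /=.
by have := ctrans_ge c_bounded phiB x y; lra.
Qed.

Lemma dual_value_le_Phi_c (phi psi : Om -> R) : Phi_c c mu nu phi ->
  continuous psi -> dual_value c mu nu psi <= dual_value c mu nu phi.
Proof.
by move=> [cphi phi_opt] cpsi; rewrite -lee_fin -(dual_valueE cphi) phi_opt weak_duality.
Qed.

Lemma Phi_c_dual_value_ge (phi psi : Om -> R) : Phi_c c mu nu phi ->
  continuous psi -> dual_value c mu nu phi <= dual_value c mu nu psi ->
  Phi_c c mu nu psi.
Proof.
move=> [cphi phi_opt] cpsi le_phi_psi; split => //.
apply/eqP; rewrite eq_le dual_valueE // weak_duality //=.
by rewrite -phi_opt dual_valueE // lee_fin.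
Qed.

End compact_duality.

Section min_max.
Context {R : realType} {Om Oms : pmetricType R} (c : Om * Oms -> R).
Hypotheses (Om_compact : compact [set: Om]) (Oms_compact : compact [set: Oms]).
Hypothesis c_continuous : continuous c.
Variables (mu1 mu2 : probability (borel Om) R) (nu : probability (borel Oms) R).
Variable U : set (borel Om).
Hypothesis mU : measurable U.
Hypothesis le_mu :
  forall A : set (borel Om), measurable A -> A `<=` U -> (mu1 A <= mu2 A)%E.
Variables phi1 phi2 : Om -> R.
Hypotheses (phi1_continuous : continuous phi1) (phi2_continuous : continuous phi2).
Hypothesis le_phi : forall x, ~ U x -> phi1 x <= phi2 x.

Let min_continuous := min_fun_continuous phi1_continuous phi2_continuous.
Let max_continuous := max_fun_continuous phi1_continuous phi2_continuous.
Let c_bounded := continuous_bounded_funX Om_compact Oms_compact c_continuous.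
Let int_continuous := integrable_continuous Om_compact.
Let int_ctrans := integrable_ctrans Om_compact Oms_compact c_continuous.
Let le_optimal := dual_value_le_Phi_c Om_compact Oms_compact c_continuous.
Let optimal_of_ge := Phi_c_dual_value_ge Om_compact Oms_compact c_continuous.

Lemma Rintegral_min_add_max_ge :
  \int[mu1]_x phi1 x + \int[mu2]_x phi2 x
  <= \int[mu1]_x (phi1 \min phi2) x + \int[mu2]_x (phi1 \max phi2) x.
Proof.
pose g x := phi1 x - (phi1 \min phi2) x.
have g_continuous : continuous g.
  by move=> x; apply: cvgB; [exact: phi1_continuous|exact: min_continuous].
have le_g : \int[mu1]_x g x <= \int[mu2]_x g x.
  rewrite -lee_fin !EFin_Rintegral ?int_continuous //.
  apply: ge0_le_measure_integral_supp mU le_mu _ _ _.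
  - by apply/measurable_EFinP; exact (continuous_measurable g_continuous).
  - by move=> x; rewrite lee_fin /g subr_ge0 ge_min lexx.
  - by move=> x /le_phi le12; rewrite /g /= (min_idPl le12) subrr.
have minE : \int[mu1]_x (phi1 \min phi2) x = \int[mu1]_x phi1 x - \int[mu1]_x g x.
  rewrite -RintegralB //; last 2 first; try by apply: int_continuous.
  by apply: eq_Rintegral => x _; rewrite /g; lra.
have maxE : \int[mu2]_x (phi1 \max phi2) x = \int[mu2]_x phi2 x + \int[mu2]_x g x.
  rewrite -RintegralD //; last 2 first; try by apply: int_continuous.
  apply: eq_Rintegral => x _.
  by have := addr_min_max (phi1 x) (phi2 x); rewrite /g /=; lra.
by rewrite minE maxE; lra.
Qed.

Lemma Rintegral_ctrans_min_add_max_le :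
  \int[nu]_y ctrans c (phi1 \min phi2) y + \int[nu]_y ctrans c (phi1 \max phi2) y
  <= \int[nu]_y ctrans c phi1 y + \int[nu]_y ctrans c phi2 y.
Proof.
have integrable_sum (f1 f2 : Om -> R) : continuous f1 -> continuous f2 ->
    nu.-integrable setT (EFin \o (fun y => ctrans c f1 y + ctrans c f2 y)).
  move=> cf1 cf2.
  exact (integrableD measurableT (int_ctrans nu cf1) (int_ctrans nu cf2)).
rewrite -!RintegralD //; try by apply: int_ctrans.
apply: le_Rintegral => //; try by apply: integrable_sum.
by move=> y _; apply: (ctrans_min_add_max_le c_bounded); apply: continuous_bounded_fun.
Qed.

Lemma dual_value_min_add_max_ge :
  dual_value c mu1 nu phi1 + dual_value c mu2 nu phi2
  <= dual_value c mu1 nu (phi1 \min phi2) + dual_value c mu2 nu (phi1 \max phi2).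
Proof.
rewrite /dual_value.
by have := Rintegral_min_add_max_ge; have := Rintegral_ctrans_min_add_max_le; lra.
Qed.

Lemma Phi_c_min_max : Phi_c c mu1 nu phi1 -> Phi_c c mu2 nu phi2 ->
  Phi_c c mu1 nu (phi1 \min phi2) /\ Phi_c c mu2 nu (phi1 \max phi2).
Proof.
move=> phi1_opt phi2_opt.
have le1 := le_optimal phi1_opt min_continuous.
have le2 := le_optimal phi2_opt max_continuous.
have ge := dual_value_min_add_max_ge.
by split; [apply: (optimal_of_ge phi1_opt)|apply: (optimal_of_ge phi2_opt)] => //; lra.
Qed.

End min_max.

Lemma unique_up_to_const_eq {R : realType} {Om : pmetricType R}
  (Phi : (Om -> R) -> Prop) (phi psi : Om -> R) (x0 : Om) :
  unique_up_to_const Phi phi -> Phi psi -> psi x0 = phi x0 -> psi = phi.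
Proof.
move=> phi_uniq /phi_uniq[C ->] /= phiC; have C0 : C = 0 by lra.
by apply/funext => x; rewrite C0 addr0.
Qed.

Unset Implicit Arguments.

Theorem corollary3p3 (R : realType) (Om Oms : pmetricType R)
  (hOm : compact [set: Om]) (hOms : compact [set: Oms])
  (c : Om * Oms -> R) (hc : continuous c)
  (mu1 mu2 : probability (borel Om) R) (nu : probability (borel Oms) R)
  (phi1 phi2 : Om -> R)
  (h1 : Phi_c c mu1 nu phi1) (h2 : Phi_c c mu2 nu phi2)
  (huniq : unique_up_to_const (Phi_c c mu1 nu) phi1 \/
           unique_up_to_const (Phi_c c mu2 nu) phi2)
  (U : set (borel Om)) (hU : measurable U) (hUT : U <> [set: Om])
  (hmu : forall A : set (borel Om), measurable A -> A `<=` U ->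
           (mu1 A <= mu2 A)%E)
  (hphi : forall x : Om, ~ U x -> phi1 x <= phi2 x) :
  forall x : Om, phi1 x <= phi2 x.
Proof.
have [x0 x0_notin_U] : exists x0, ~ U x0 by apply/setTPn/eqP.
have [min_opt max_opt] :=
  Phi_c_min_max hOm hOms hc hU hmu (proj1 h1) (proj1 h2) hphi h1 h2.
have phi_x0 := hphi x0 x0_notin_U.
case: huniq => [/unique_up_to_const_eq uniq1|/unique_up_to_const_eq uniq2] x.
- have <- : phi1 \min phi2 = phi1 by apply: (uniq1 _ x0) => //=; exact/min_idPl.
  by rewrite /= ge_min lexx orbT.
- have <- : phi1 \max phi2 = phi2 by apply: (uniq2 _ x0) => //=; exact/max_idPr.
  by rewrite /= le_max lexx.
Qed.
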